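(* Let $C\in\mathbb{R}^{n\times n}$ be symmetric, $\alpha>0$ and $\rho\ge\alpha\|C\|_\infty$, $\rho>0$. Let $(\tilde\sigma^k,\sigma^k,y^k)$ be generated by the ADMM-BM algorithm described in the context, with Assumption A holding. Then $\|\gamma_i^k\|\ge 1-\frac4\alpha-\frac2{\alpha^2}$ for all $i\in[n]$ and all $k\ge2$.
   Context: $\|C\|_\infty=\max_i\sum_j|C_{ij}|$. For $\sigma\in\mathbb{R}^{n\times r}$, $\sigma_i$ is its $i$-th row; $\mathcal{M}=\{\sigma\in\mathbb{R}^{n\times r}:\|\sigma_i\|=1\ \forall i\}$. ADMM-BM with parameter $\rho$: choose $\tilde\sigma^0\in\mathcal{M}$, $\sigma^0=\tilde\sigma^0$, $y^0=C\tilde\sigma^0$. For $k=0,1,\dots$: $\gamma^k=\sigma^k-\frac1\rho(y^k+C\sigma^k)$ with rows $\gamma_i^k$; $\tilde\sigma^{k+1}_i=\gamma_i^k/\|\gamma_i^k\|$; $\sigma^{k+1}=\tilde\sigma^{k+1}+\frac1\rho(y^k-C\tilde\sigma^{k+1})$; $y^{k+1}=y^k+\rho(\tilde\sigma^{k+1}-\sigma^{k+1})$. Assumption A: $\gamma_i^k\neq0$ for all $i,k$ (so the iterates are well defined). *)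

From HB Require Import structures.
From mathcomp Require Import all_boot all_order all_algebra.
Set Implicit Arguments. Unset Strict Implicit. Unset Printing Implicit Defensive.
Import Order.TTheory GRing.Theory Num.Theory.
Local Open Scope ring_scope.

Definition row_norm (R : rcfType) (n r : nat) (M : 'M[R]_(n, r)) (i : 'I_n) : R :=
  Num.sqrt (\sum_(j < r) M i j ^+ 2).

Definition inf_norm (R : rcfType) (n : nat) (C : 'M[R]_n) : R :=
  \big[Num.max/0]_(i < n) \sum_(j < n) `|C i j|.

Definition admm_gamma (R : rcfType) (n r : nat) (rho : R) (C : 'M[R]_n)
  (s y : 'M[R]_(n, r)) : 'M[R]_(n, r) :=
  s - rho^-1 *: (y + C *m s).

Definition row_normalize (R : rcfType) (n r : nat) (G : 'M[R]_(n, r)) : 'M[R]_(n, r) :=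
  \matrix_(i, j) (G i j / row_norm G i).

Definition on_manifold (R : rcfType) (n r : nat) (M : 'M[R]_(n, r)) : Prop :=
  forall i : 'I_n, row_norm M i = 1.

From HB Require Import structures.
From mathcomp Require Import all_boot all_order all_algebra.
From mathcomp Require Import ring lra.
Set Implicit Arguments. Unset Strict Implicit. Unset Printing Implicit Defensive.
Import Order.TTheory GRing.Theory Num.Theory.
Local Open Scope ring_scope.

(* The dual iterate is always [y^k = C σ̃^k], so for k >= 1 we get
   [σ^k = σ̃^k + D (σ̃^(k-1) - σ̃^k)] and [γ^k = σ^k - D σ̃^k - D σ^k] with
   [D = C / ρ].  Every row of [D] has l1-norm at most [1/α], so multiplying by
   [D] scales the largest row norm by at most [1/α].  As the rows of σ̃ are unit
   vectors, [γ_i^k] therefore lies within [2/α + 1/α + (1 + 2/α)/α] of the unit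
   vector [σ̃_i^k]; in particular the bound already holds for k >= 1. *)

Section RowNorm.
Variables (R : rcfType) (n r : nat).
Implicit Types (A B : 'M[R]_(n, r)) (i : 'I_n).

Lemma row_norm_ge0 A i : 0 <= row_norm A i.
Proof. exact: sqrtr_ge0. Qed.

Lemma sqr_row_norm A i : row_norm A i ^+ 2 = \sum_j A i j ^+ 2.
Proof. by rewrite sqr_sqrtr // sumr_ge0 // => j _; apply: sqr_ge0. Qed.

Lemma row_norm_eq0 {A i} : row_norm A i = 0 -> forall j, A i j = 0.
Proof.
move=> A0 j; apply/eqP; rewrite -sqrf_eq0; apply/eqP.
have sum0 : \sum_l A i l ^+ 2 = 0 by rewrite -sqr_row_norm A0 expr0n.
exact: (psumr_eq0P (fun l _ => sqr_ge0 (A i l)) sum0).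
Qed.

Lemma row_norm_CauchySchwarz A B i :
  \sum_j A i j * B i j <= row_norm A i * row_norm B i.
Proof.
set a := row_norm A i; set b := row_norm B i.
have [a0|a_neq0] := eqVneq a 0.
  by rewrite a0 mul0r big1 // => j _; rewrite (row_norm_eq0 a0 j) mul0r.
have [b0|b_neq0] := eqVneq b 0.
  by rewrite b0 mulr0 big1 // => j _; rewrite (row_norm_eq0 b0 j) mulr0.
have ab_gt0 : 0 < a * b.
  by rewrite mulr_gt0 // lt_def ?a_neq0 ?b_neq0 ?row_norm_ge0.
(* from [0 <= \sum_j (b A_ij - a B_ij)^2] *)
have : 2 * (a * b) * \sum_j A i j * B i j <= 2 * (a * b) * (a * b).
  have -> : 2 * (a * b) * (a * b) = \sum_j (b ^+ 2 * A i j ^+ 2 + a ^+ 2 * B i j ^+ 2).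
    by rewrite big_split /= -!mulr_sumr -!sqr_row_norm -/a -/b; ring.
  rewrite mulr_sumr; apply: ler_sum => j _.
  have := sqr_ge0 (b * A i j - a * B i j); nra.
by rewrite ler_pM2l // mulr_gt0.
Qed.

Lemma ler_row_normD A B i : row_norm (A + B) i <= row_norm A i + row_norm B i.
Proof.
have sum_ge0 : 0 <= row_norm A i + row_norm B i by rewrite addr_ge0 ?row_norm_ge0.
rewrite -(ger0_norm sum_ge0) -sqrtr_sqr ler_sqrt ?sqr_ge0 //.
have -> : \sum_j (A + B) i j ^+ 2
    = row_norm A i ^+ 2 + row_norm B i ^+ 2 + 2 * \sum_j A i j * B i j.
  rewrite !sqr_row_norm mulr_sumr -!big_split /=.
  by apply: eq_bigr => j _; rewrite mxE; ring.
have := row_norm_CauchySchwarz A B i; nra.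
Qed.

Lemma row_normN A i : row_norm (- A) i = row_norm A i.
Proof. by congr Num.sqrt; apply: eq_bigr => j _; rewrite mxE sqrrN. Qed.

Lemma row_normZ c A i : row_norm (c *: A) i = `|c| * row_norm A i.
Proof.
rewrite /row_norm -sqrtr_sqr -sqrtrM ?sqr_ge0 // mulr_sumr.
by congr Num.sqrt; apply: eq_bigr => j _; rewrite mxE exprMn.
Qed.

Lemma lerB_row_normD A B i : row_norm A i - row_norm B i <= row_norm (A + B) i.
Proof.
have := ler_row_normD (A + B) (- B) i.
by rewrite row_normN addrK lerBlDr.
Qed.

Lemma ler_row_norm_sum (I : Type) (s : seq I) (F : I -> 'M[R]_(n, r)) i :
  row_norm (\sum_(l <- s) F l) i <= \sum_(l <- s) row_norm (F l) i.
Proof.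
elim/big_rec2: _ => [|l M x _ IH].
  by rewrite /row_norm big1 ?sqrtr0 // => j _; rewrite mxE expr0n.
by apply: le_trans (ler_row_normD _ _ _) _; rewrite lerD2l.
Qed.

Lemma row_norm_row A i : row_norm (row i A) 0 = row_norm A i.
Proof. by congr Num.sqrt; apply: eq_bigr => j _; rewrite mxE. Qed.

End RowNorm.

Lemma ler_row_norm_mulmx (R : rcfType) (m n r : nat) (D : 'M[R]_(m, n))
    (X : 'M[R]_(n, r)) i :
  row_norm (D *m X) i <= \sum_j `|D i j| * row_norm X j.
Proof.
rewrite -row_norm_row row_mul mulmx_sum_row.
apply: le_trans (ler_row_norm_sum _ _ _) _.
by apply: ler_sum => j _; rewrite row_normZ row_norm_row mxE.
Qed.

Lemma row_norm_row_normalize (R : rcfType) (n r : nat) (G : 'M[R]_(n, r)) i :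
  row_norm G i != 0 -> row_norm (row_normalize G) i = 1.
Proof.
move=> G_neq0; rewrite /row_norm.
under eq_bigr do rewrite mxE exprMn exprVn.
by rewrite -mulr_suml -sqr_row_norm mulfV ?sqrtr1 // sqrf_eq0.
Qed.

Lemma row_abs_sum_le_inf_norm (R : rcfType) (n : nat) (C : 'M[R]_n) i :
  \sum_j `|C i j| <= inf_norm C.
Proof. exact: (le_bigmax 0 (fun i => \sum_j `|C i j|) i). Qed.

Section ADMMStep.
Variables (R : rcfType) (n r : nat) (C : 'M[R]_n) (alpha rho : R).
Hypotheses (alpha_gt0 : 0 < alpha) (rho_gt0 : 0 < rho).
Hypothesis rho_ge : alpha * inf_norm C <= rho.

Let D := rho^-1 *: C.

Lemma row_abs_sum_scaled_le i : \sum_j `|D i j| <= alpha^-1.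
Proof.
have -> : \sum_j `|D i j| = rho^-1 * \sum_j `|C i j|.
  by rewrite mulr_sumr; apply: eq_bigr => j _; rewrite mxE normrM gtr0_norm ?invr_gt0.
rewrite mulrC ler_pdivrMr // mulrC ler_pdivlMr // mulrC.
by apply: le_trans rho_ge; rewrite ler_pM2l ?row_abs_sum_le_inf_norm.
Qed.

Lemma row_norm_scaled_mulmx_le (X : 'M[R]_(n, r)) b i :
  (forall j, row_norm X j <= b) -> row_norm (D *m X) i <= alpha^-1 * b.
Proof.
move=> X_le; have b_ge0 : 0 <= b := le_trans (row_norm_ge0 X i) (X_le i).
apply: le_trans (ler_row_norm_mulmx _ _ _) _.
apply: (@le_trans _ _ (\sum_j `|D i j| * b)).
  by apply: ler_sum => j _; rewrite ler_wpM2l.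
by rewrite -mulr_suml ler_wpM2r ?row_abs_sum_scaled_le.
Qed.

Lemma admm_gamma_row_norm_ge (P Q : 'M[R]_(n, r)) i :
  on_manifold P -> on_manifold Q ->
  1 - 4 / alpha - 2 / alpha ^+ 2 <=
    row_norm (admm_gamma rho C (Q + D *m (P - Q)) (C *m Q)) i.
Proof.
move=> P1 Q1; set S := Q + D *m (P - Q); set c := alpha^-1.
have PQ_le j : row_norm (P - Q) j <= 2.
  by apply: le_trans (ler_row_normD _ _ _) _; rewrite row_normN P1 Q1.
have DPQ_le j : row_norm (D *m (P - Q)) j <= c * 2.
  exact: row_norm_scaled_mulmx_le.
have DQ_le : row_norm (D *m Q) i <= c * 1.
  by apply: row_norm_scaled_mulmx_le => j; rewrite Q1.
have DS_le : row_norm (D *m S) i <= c * (1 + c * 2).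
  apply: row_norm_scaled_mulmx_le => j.
  by apply: le_trans (ler_row_normD _ _ _) _; rewrite Q1 lerD2l.
have -> : admm_gamma rho C S (C *m Q)
    = Q + (D *m (P - Q) - (D *m Q + D *m S)).
  by rewrite /admm_gamma scalerDr !scalemxAl /S -!addrA.
apply: le_trans (lerB_row_normD _ _ _); rewrite Q1.
have := ler_row_normD (D *m (P - Q)) (- (D *m Q + D *m S)) i.
have := ler_row_normD (D *m Q) (D *m S) i.
have -> : 1 - 4 / alpha - 2 / alpha ^+ 2 = 1 - (c * 2 + c * 1 + c * (1 + c * 2)).
  by rewrite -exprVn -/c; ring.
have := DPQ_le i; rewrite row_normN; lra.
Qed.

End ADMMStep.

Lemma admm_dual_eq (R : rcfType) (n r : nat) (C : 'M[R]_n) (rho : R)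
    (st s y : nat -> 'M[R]_(n, r)) :
  rho != 0 ->
  y 0%N = C *m st 0%N ->
  (forall k, s k.+1 = st k.+1 + rho^-1 *: (y k - C *m st k.+1)) ->
  (forall k, y k.+1 = y k + rho *: (st k.+1 - s k.+1)) ->
  forall k, y k = C *m st k.
Proof.
move=> rho_neq0 y0 s_succ y_succ; elim=> [//|k _].
by rewrite y_succ s_succ opprD addNKr scalerN scalerA mulfV // scale1r opprB addrC subrK.
Qed.

Lemma admm_on_manifold (R : rcfType) (n r : nat) (C : 'M[R]_n) (rho : R)
    (st s y : nat -> 'M[R]_(n, r)) :
  on_manifold (st 0%N) ->
  (forall k, st k.+1 = row_normalize (admm_gamma rho C (s k) (y k))) ->
  (forall k i, row_norm (admm_gamma rho C (s k) (y k)) i != 0) ->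
  forall k, on_manifold (st k).
Proof.
by move=> st0 st_succ gamma_neq0 [|k] i //; rewrite st_succ row_norm_row_normalize.
Qed.

Theorem lemma2 (R : rcfType) (n r : nat) (C : 'M[R]_n) (alpha rho : R)
  (st s y : nat -> 'M[R]_(n, r)) :
  C^T = C ->
  0 < alpha ->
  0 < rho ->
  alpha * inf_norm C <= rho ->
  on_manifold (st 0%N) ->
  s 0%N = st 0%N ->
  y 0%N = C *m st 0%N ->
  (forall k : nat, st k.+1 = row_normalize (admm_gamma rho C (s k) (y k))) ->
  (forall k : nat, s k.+1 = st k.+1 + rho^-1 *: (y k - C *m st k.+1)) ->
  (forall k : nat, y k.+1 = y k + rho *: (st k.+1 - s k.+1)) ->
  (* Assumption A *)
  (forall (k : nat) (i : 'I_n), row_norm (admm_gamma rho C (s k) (y k)) i != 0) ->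
  forall (k : nat) (i : 'I_n), (2 <= k)%N ->
    1 - 4 / alpha - 2 / alpha ^+ 2 <= row_norm (admm_gamma rho C (s k) (y k)) i.
Proof.
move=> _ alpha_gt0 rho_gt0 rho_ge st0 _ y0 st_succ s_succ y_succ gamma_neq0 [//|k] i _.
have y_eq := admm_dual_eq (lt0r_neq0 rho_gt0) y0 s_succ y_succ.
have st_unit := admm_on_manifold st0 st_succ gamma_neq0.
have -> : s k.+1 = st k.+1 + (rho^-1 *: C) *m (st k - st k.+1).
  by rewrite s_succ y_eq -scalemxAl mulmxBr.
by rewrite y_eq admm_gamma_row_norm_ge.
Qed.
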